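(* Let $m,N\ge1$, let $d$ be a positive divisor of $m$, and let $\chi$ be a Dirichlet character modulo $N$ with conductor $N_\chi$. Define $$\Sigma(N,m,d) = \sum_{\tau}\phi(\gcd(\tau,N/\tau))\,\chi(y_\tau),$$ where $\tau$ runs over positive divisors of $N$ such that $\gcd(\tau,N/\tau)$ divides $\gcd(N/N_\chi,\, d-m/d)$, and $y_\tau$ is an integer (unique modulo $\mathrm{lcm}(\tau,N/\tau)$) with $y_\tau\equiv d \pmod{\tau}$ and $y_\tau\equiv m/d\pmod{N/\tau}$. Then $|\Sigma(N,m,d)|\le \sqrt{N}\,2^{\omega(N)}$ always, and if $d\ne\sqrt m$ then $|\Sigma(N,m,d)|\le |d-m/d|\,2^{\omega(N)}$.
   Context: $\phi$ is Euler's totient function; $\omega(N)$ is the number of distinct prime divisors of $N$; $\gcd(a,0)=a$. *)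

From mathcomp Require Import all_boot all_order all_algebra all_field.
Set Implicit Arguments. Unset Strict Implicit. Unset Printing Implicit Defensive.
Import Order.TTheory GRing.Theory Num.Theory.
Local Open Scope ring_scope.

Definition dirichlet_char (N : nat) (chi : int -> algC) : Prop :=
  [/\ chi 1 = 1,
      (forall a b : int, chi (a * b) = chi a * chi b),
      (forall a : int, chi (a + N%:Z) = chi a) &
      (forall a : int, (chi a == 0) = ~~ coprimez a N%:Z)].

Definition induced_from (N : nat) (chi : int -> algC) (M : nat) : Prop :=
  forall a : int, coprimez a N%:Z -> (a == 1 %[mod M%:Z])%Z -> chi a = 1.

Definition is_conductor (N : nat) (chi : int -> algC) (M : nat) : Prop :=
  [/\ (0 < M)%N, (M %| N)%N, induced_from N chi M &
      (forall M' : nat, (0 < M')%N -> (M' %| N)%N -> induced_from N chi M' ->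
         (M <= M')%N)].

Definition omega (n : nat) : nat := size (primes n).

Definition sigma_cond (N Nchi m d t : nat) : bool :=
  ((gcdn t (N %/ t))%:Z %|
     gcdz (N %/ Nchi)%:Z (d%:Z - (m %/ d)%:Z))%Z.

(* Sigma(N,m,d) for a given choice y of the integers y_t. *)
Definition Sigma (N Nchi m d : nat) (chi : int -> algC) (y : nat -> int) : algC :=
  \sum_(t <- divisors N | sigma_cond N Nchi m d t)
     (totient (gcdn t (N %/ t)))%:R * chi (y t).

From mathcomp Require Import all_boot all_order all_algebra all_field.
From mathcomp Require Import cyclic.
Import Order.TTheory GRing.Theory Num.Theory.
Set Implicit Arguments. Unset Strict Implicit.

(* Since [|chi| <= 1], [|Sigma|] is at most the sum of [totient g_t] with
   [g_t = gcd(t, N/t)] over the admissible divisors [t]. Writing [g = g_t], the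
   quotient [t/g] is a unitary divisor of [N/g^2], so each value [g] arises from
   at most [2^omega(N)] divisors [t], and always [g^2 | N]. The integers [g] with
   [g^2 | N] and [g | E := gcd(N/N_chi, d - m/d)] are closed under lcm and under
   taking divisors, hence are the divisors of their lcm [L], and the sum of
   their totients is [L]. Both bounds follow from [L^2 | N] and [L | d - m/d]. *)

Local Open Scope nat_scope.

Definition unitary_divisor (n u : nat) : bool := (u %| n) && coprime u (n %/ u).

Lemma partn_unitary_divisor n u :
  0 < n -> unitary_divisor n u -> n`_\pi(u) = u.
Proof.
move=> n_gt0 /andP[u_dvd u_cop].
have u_gt0 : 0 < u by apply: dvdn_gt0 u_dvd.
have v_gt0 : 0 < n %/ u by rewrite divn_gt0 // dvdn_leq.
rewrite -{1}(divnK u_dvd) mulnC partnM // part_pnat_id ?pnat_pi //.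
by rewrite part_p'nat ?muln1 // -coprime_pi'.
Qed.

(* A unitary divisor is determined by which primes of [n] divide it. *)
Lemma size_unitary_divisors n (s : seq nat) :
  0 < n -> uniq s -> {subset s <= unitary_divisor n} -> size s <= 2 ^ omega n.
Proof.
move=> n_gt0 s_uniq s_unitary.
pose f (u : nat) : {ffun 'I_(omega n) -> bool} :=
  [ffun i : 'I_(omega n) => nth 0 (primes n) i \in primes u].
have f_inj : {in s &, injective f}.
  move=> u1 u2 /s_unitary u1n /s_unitary u2n f12.
  rewrite -(partn_unitary_divisor n_gt0 u1n) -(partn_unitary_divisor n_gt0 u2n).
  apply: eq_in_partn => p p_n.
  have p_idx : index p (primes n) < omega n by rewrite index_mem.
  have := congr1 (fun g : {ffun _ -> _} => g (Ordinal p_idx)) f12.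
  by rewrite !ffunE /= nth_index.
rewrite -(size_map f) -(card_uniqP _) ?(map_inj_in_uniq f_inj) //.
by rewrite (leq_trans (max_card _)) // card_ffun card_bool card_ord.
Qed.

Lemma leq_omega_dvd m n : 0 < n -> m %| n -> omega m <= omega n.
Proof.
move=> n_gt0 mn; apply: uniq_leq_size; first exact: primes_uniq.
move=> p; rewrite !mem_primes => /and3P[p_pr _ pm].
by rewrite p_pr n_gt0 (dvdn_trans pm mn).
Qed.

Section GcdCofactor.
Variables (N t : nat).
Hypotheses (N_gt0 : 0 < N) (t_dvd : t %| N).
Let g := gcdn t (N %/ t).

Lemma gcd_cofactor_gt0 : 0 < g.
Proof. by rewrite gcdn_gt0 (dvdn_gt0 N_gt0 t_dvd). Qed.

Lemma sqr_gcd_cofactor_dvd : g * g %| N.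
Proof.
by rewrite -[X in _ %| X](divnK t_dvd) mulnC dvdn_mul ?dvdn_gcdl ?dvdn_gcdr.
Qed.

Lemma divn_gcd_cofactor : t %/ g * (N %/ t %/ g) = N %/ (g * g).
Proof.
apply/eqP; rewrite eqn_div ?muln_gt0 ?gcd_cofactor_gt0 ?sqr_gcd_cofactor_dvd //.
rewrite mulnACA !divnK ?dvdn_gcdl ?dvdn_gcdr //.
by rewrite mulnC divnK.
Qed.

Lemma unitary_divisor_gcd_cofactor : unitary_divisor (N %/ (g * g)) (t %/ g).
Proof.
have tg_gt0 : 0 < t %/ g.
  by rewrite divn_gt0 ?gcd_cofactor_gt0 // dvdn_leq ?dvdn_gcdl ?(dvdn_gt0 N_gt0).
rewrite /unitary_divisor -divn_gcd_cofactor mulKn // dvdn_mulr //=.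
rewrite /coprime -(eqn_pmul2r gcd_cofactor_gt0) mul1n muln_gcdl.
by rewrite !divnK ?dvdn_gcdl ?dvdn_gcdr.
Qed.

End GcdCofactor.

Lemma count_gcd_cofactor_eq N g : 0 < N ->
  count (fun t => gcdn t (N %/ t) == g) (divisors N) <= 2 ^ omega N.
Proof.
move=> N_gt0; rewrite -size_filter.
set s := filter _ _.
have s_dvd t : t \in s -> [/\ t %| N & gcdn t (N %/ t) = g].
  by rewrite mem_filter -dvdn_divisors // => /andP[/eqP].
case: (boolP (g * g %| N)) => [g2N | g2N']; last first.
  case: s s_dvd => // t s' /(_ t (mem_head _ _)) [tN tg].
  by rewrite -tg sqr_gcd_cofactor_dvd in g2N'.
have g_gt0 : 0 < g by have := dvdn_gt0 N_gt0 g2N; rewrite muln_gt0 andbb.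
have N'_gt0 : 0 < N %/ (g * g) by rewrite divn_gt0 ?muln_gt0 ?g_gt0 // dvdn_leq.
have s_uniq : uniq (map (divn^~ g) s).
  have tK t : t \in s -> t = t %/ g * g.
    by case/s_dvd=> _ tg; rewrite divnK // -tg dvdn_gcdl.
  rewrite map_inj_in_uniq ?filter_uniq ?divisors_uniq // => t1 t2 t1s t2s /= e12.
  by rewrite (tK t1) // (tK t2) // e12.
have s_unitary : {subset map (divn^~ g) s <= unitary_divisor (N %/ (g * g))}.
  by move=> _ /mapP[t /s_dvd[tN <-] ->]; apply: unitary_divisor_gcd_cofactor.
rewrite -(size_map (divn^~ g)).
apply: leq_trans (size_unitary_divisors N'_gt0 s_uniq s_unitary) _.
by rewrite leq_pexp2l // leq_omega_dvd // dvdn_div.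
Qed.

Lemma sum_gcd_cofactor_leq N (P : pred nat) (F : nat -> nat) : 0 < N ->
  \sum_(t <- divisors N | P (gcdn t (N %/ t))) F (gcdn t (N %/ t))
    <= 2 ^ omega N * \sum_(g < N.+1 | (g * g %| N) && P g) F g.
Proof.
move=> N_gt0; set G := fun t => gcdn t (N %/ t).
have G_lt t : t \in divisors N -> G t < N.+1.
  by move=> tN; rewrite ltnS dvdn_leq // (dvdn_trans (dvdn_gcdl _ _)) // dvdn_divisors.
have split_by_gcd : \sum_(t <- divisors N | P (G t)) F (G t) =
    \sum_(t <- divisors N) \sum_(g < N.+1 | G t == g) (if P g then F g else 0).
  rewrite big_mkcond; apply: eq_big_seq => t tN.
  by rewrite (big_pred1 (Ordinal (G_lt t tN))) // => g /=.
rewrite split_by_gcd (exchange_big_dep predT) //= big_distrr [X in _ <= X]big_mkcond /=.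
apply: leq_sum => g _; rewrite big_const_seq iter_addn_0.
case: (boolP (g * g %| N)) => [g2N | g2N']; last first.
  rewrite (eq_in_count (a2 := pred0)) ?count_pred0 ?muln0 // => t.
  rewrite -dvdn_divisors // => tN /=; apply: contraNF g2N' => /eqP <-.
  exact: sqr_gcd_cofactor_dvd.
by case: (P g); rewrite ?muln0 // mulnC leq_mul // count_gcd_cofactor_eq.
Qed.

(* A set closed under lcm and divisors is the set of divisors of its lcm [L],
   so the sum is [L] by Gauss's identity [\sum_(d %| L) totient d = L]. *)
Lemma sum_totient_lcm_closed n (P : pred nat) :
    P 1 -> (forall a b, P a -> P b -> P (lcmn a b)) ->
    (forall a b, a %| b -> P b -> P a) -> (forall g, P g -> 0 < g <= n) ->
  exists2 L, P L & \sum_(g < n.+1 | P g) totient g = L.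
Proof.
move=> P1 P_lcm P_dvd P_bound.
pose L := \big[lcmn/1]_(g < n.+1 | P g) g.
have PL : P L by apply: (big_ind P).
have /andP[L_gt0 L_le] := P_bound L PL.
exists L => //.
rewrite -[RHS]sum_totient_dvd (big_ord_widen_cond n.+1 (fun d => d %| L) totient) //.
apply: eq_bigl => g; apply/idP/andP => [Pg | [gL _]]; last exact: P_dvd gL PL.
have gL : g %| L := biglcmn_sup g Pg (dvdnn g).
by rewrite gL ltnS dvdn_leq.
Qed.

Lemma sqr_lcm_dvd N a b :
  a * a %| N -> b * b %| N -> lcmn a b * lcmn a b %| N.
Proof.
move=> aN bN.
have abN : a * b %| N.
  by rewrite -(@dvdn_pexp2r _ _ 2) // expnMn -!mulnn dvdn_mul.
rewrite muln_lcml dvdn_lcm !muln_lcmr !dvdn_lcm aN bN abN /=.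
by rewrite mulnC abN.
Qed.

Lemma sum_totient_gcd_cofactor N E : 0 < N ->
  exists2 L, (L * L %| N) && (L %| E) &
    \sum_(t <- divisors N | gcdn t (N %/ t) %| E) totient (gcdn t (N %/ t))
      <= 2 ^ omega N * L.
Proof.
move=> N_gt0.
have [|a b /andP[aN aE] /andP[bN bE]|a b ab /andP[bN bE]|g /andP[gN _]|L PL sumL] :=
  @sum_totient_lcm_closed N (fun g => (g * g %| N) && (g %| E)).
- by rewrite mul1n !dvd1n.
- by rewrite sqr_lcm_dvd // dvdn_lcm aE.
- by rewrite (dvdn_trans (dvdn_mul ab ab)) // (dvdn_trans ab).
- have g_gt0 : 0 < g by have := dvdn_gt0 N_gt0 gN; rewrite muln_gt0 andbb.
  by rewrite g_gt0 (leq_trans (leq_pmulr g g_gt0)) // dvdn_leq.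
by exists L; rewrite // -sumL; apply: (sum_gcd_cofactor_leq (fun g => g %| E)).
Qed.

Local Close Scope nat_scope.
Local Open Scope ring_scope.

Section DirichletCharacterNorm.
Variables (N : nat) (chi : int -> algC).
Hypotheses (N_gt0 : (0 < N)%N) (chi_dc : dirichlet_char N chi).

Lemma dirichlet_char_periodic (k : int) a : chi (a + k * N%:Z) = chi a.
Proof.
have [_ _ chiD _] := chi_dc.
have chiDn (n : nat) b : chi (b + n%:Z * N%:Z) = chi b.
  elim: n b => [|n IHn] b; first by rewrite mul0r addr0.
  by rewrite -addn1 PoszD mulrDl mul1r addrA chiD IHn.
case: k => n; first exact: chiDn.
by rewrite -[in RHS](subrK (n.+1%:Z * N%:Z) a) chiDn NegzE mulNr.
Qed.

Lemma dirichlet_char_modz a : chi a = chi (a %% N%:Z)%Z.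
Proof. by rewrite {1}(divz_eq a N%:Z) addrC dirichlet_char_periodic. Qed.

Lemma dirichlet_charX a k : chi (a ^+ k) = chi a ^+ k.
Proof.
have [chi1 chiM _ _] := chi_dc.
by elim: k => [|k IHk]; rewrite ?expr0 ?chi1 // !exprS chiM IHk.
Qed.

(* By Euler's theorem [chi a] is a [totient N]-th root of unity when [a] is
   coprime to [N], and [chi a = 0] otherwise. *)
Lemma dirichlet_char_norm_le1 a : `|chi a| <= 1.
Proof.
have [chi1 _ _ chi0] := chi_dc.
have [a_cop | a_ncop] := boolP (coprimez a N%:Z); last first.
  have /eqP-> : chi a == 0 by rewrite chi0.
  by rewrite normr0 ler01.
pose b := `|(a %% N%:Z)%Z|%N.
have a_modN : (a %% N%:Z)%Z = b%:Z.
  by rewrite /b gez0_abs // modz_ge0 // eqz_nat -lt0n.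
have b_cop : coprime b N.
  have : coprimez b%:Z N%:Z by rewrite -a_modN /coprimez gcdz_modl.
  by rewrite coprimezE !absz_nat.
have chi_a_root : chi a ^+ totient N = 1.
  rewrite -dirichlet_charX dirichlet_char_modz -modzXm a_modN -natz -natrX natz modz_nat.
  by rewrite Euler_exp_totient // -modz_nat -dirichlet_char_modz.
have : `|chi a| ^+ totient N == 1 by rewrite -normrX chi_a_root normr1.
by rewrite pexpr_eq1 ?totient_gt0 // => /eqP->.
Qed.

End DirichletCharacterNorm.

Lemma sigma_condE N Nchi m d t :
  sigma_cond N Nchi m d t =
    (gcdn t (N %/ t) %| gcdn (N %/ Nchi) `|d%:Z - (m %/ d)%:Z|)%N.
Proof. by rewrite /sigma_cond /dvdz /gcdz !absz_nat. Qed.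

Lemma norm_Sigma_le N Nchi m d chi y : (0 < N)%N -> dirichlet_char N chi ->
  `|Sigma N Nchi m d chi y| <=
    (\sum_(t <- divisors N | sigma_cond N Nchi m d t) totient (gcdn t (N %/ t)))%:R.
Proof.
move=> N_gt0 chi_dc; rewrite natr_sum.
apply: le_trans (ler_norm_sum _ _ _) (ler_sum _ _) => t _.
by rewrite normrM normr_nat ler_piMr ?ler0n ?(dirichlet_char_norm_le1 N_gt0 chi_dc).
Qed.

Theorem lemma3p3 (m N d Nchi : nat) (chi : int -> algC) (y : nat -> int) :
  (1 <= m)%N -> (1 <= N)%N -> (0 < d)%N -> (d %| m)%N ->
  dirichlet_char N chi -> is_conductor N chi Nchi ->
  (forall t : nat, t \in divisors N -> sigma_cond N Nchi m d t ->
     (y t == d%:Z %[mod t%:Z])%Z /\ (y t == (m %/ d)%:Z %[mod (N %/ t)%:Z])%Z) ->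
  `|Sigma N Nchi m d chi y| <= sqrtC (N%:R) * 2%:R ^+ omega N /\
  ((d * d != m)%N ->
     `|Sigma N Nchi m d chi y| <= `|d%:R - (m %/ d)%:R : algC| * 2%:R ^+ omega N).
Proof.
move=> _ N_gt0 _ d_dvd_m chi_dc _ _.
set D : int := d%:Z - (m %/ d)%:Z.
have [L /andP[LLN LE] sum_le] :=
  sum_totient_gcd_cofactor (gcdn (N %/ Nchi) `|D|) N_gt0.
have Sigma_le : `|Sigma N Nchi m d chi y| <= L%:R * 2%:R ^+ omega N.
  apply: le_trans (norm_Sigma_le _ _ _ _ N_gt0 chi_dc) _.
  rewrite -natrX -natrM ler_nat mulnC.
  by under eq_bigl do rewrite sigma_condE.
split=> [|dd_neq_m]; apply: le_trans Sigma_le _;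
  rewrite ler_wpM2r ?exprn_ge0 ?ler0n //.
  rewrite -(sqrCK (ler0n _ L)) ler_sqrtC ?qualifE /= ?exprn_ge0 ?ler0n //.
  by rewrite -natrX ler_nat -mulnn dvdn_leq.
have D_neq0 : D != 0.
  apply: contra dd_neq_m; rewrite subr_eq0 eqz_nat => /eqP {2}->.
  by rewrite mulnC divnK.
have -> : d%:R - (m %/ d)%:R = D%:~R :> algC by rewrite rmorphB.
rewrite -intr_norm -natr_absz ler_nat dvdn_leq ?absz_gt0 //.
exact: dvdn_trans LE (dvdn_gcdr _ _).
Qed.
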